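(* Let $a, b \in \mathbb{N}$ and $n \in \mathbb{Z}^+$. Consider, in the ring $\mathbb{Z}$, the Frobenius template $(\mathbb{N}, (n + \mathbb{N}) \cup \{0\}, \mathbb{N})$. If $a, b$ are coprime and $n - 1$ is divisible by neither $a$ nor $b$, then \[ \mathrm{Frob}(a, b) = (a + b)n + \chi(a, b) + \mathbb{N}, \] where $\mathrm{Frob}$ is taken with respect to this template.
   Context: $\mathbb{N}$ denotes the nonnegative integers and $\mathbb{Z}^+ = \mathbb{N}\setminus\{0\}$; for $S \subseteq \mathbb{Z}$ and $g \in \mathbb{Z}$, $g + S = \{g + s : s \in S\}$. For coprime $a, b \in \mathbb{N}$, $\chi(a,b)$ denotes the least $w \in \mathbb{N}$ such that $w + \mathbb{N} \subseteq \{\lambda_1 a + \lambda_2 b : \lambda_1, \lambda_2 \in \mathbb{N}\}$; it equals $(a-1)(b-1)$. For the template $(\mathbb{N}, (n + \mathbb{N}) \cup \{0\}, \mathbb{N})$: $MN(a, b) = \{\lambda_1 a + \lambda_2 b : \lambda_1, \lambda_2 \in (n + \mathbb{N}) \cup \{0\}\}$ and $\mathrm{Frob}(a, b) = \{w \in \mathbb{Z} : w + \mathbb{N} \subseteq MN(a, b)\}$. *)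

From mathcomp Require Import all_boot all_order all_algebra.
Set Implicit Arguments. Unset Strict Implicit. Unset Printing Implicit Defensive.
Import GRing.Theory Num.Theory.
Local Open Scope ring_scope.

Definition sgrp2 (a b : nat) (x : nat) : Prop :=
  exists l1 l2 : nat, x = (l1 * a + l2 * b)%N.

Definition is_chi (a b : nat) (w : nat) : Prop :=
  (forall k : nat, sgrp2 a b (w + k)) /\
  (forall w' : nat, (forall k : nat, sgrp2 a b (w' + k)) -> (w <= w')%N).

Definition coefset (n : nat) (l : nat) : Prop := l = 0%N \/ (n <= l)%N.

Definition MN (n a b : nat) (x : int) : Prop :=
  exists l1 l2 : nat, coefset n l1 /\ coefset n l2 /\
    x = ((l1 * a + l2 * b)%N)%:Z.

Definition Frob (n a b : nat) (w : int) : Prop :=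
  forall k : nat, MN n a b (w + k%:Z).

From mathcomp Require Import all_boot all_order all_algebra zify.
Set Implicit Arguments.
Unset Strict Implicit.
Unset Printing Implicit Defensive.

Import Order.TTheory GRing.Theory Num.Theory.

(* Every element of MN(a, b) with both coefficients nonzero lies in
   (a + b) n + <a, b>, so by Sylvester's theorem MN(a, b) contains every
   integer from (a + b) n + (a - 1)(b - 1) on.  The integer just below is
   a (n - 1) + b (n - 1 + a): a representation of it with a zero coefficient
   would force b | n - 1 or a | n - 1, and one with both coefficients at least
   n would put a b - a - b in <a, b>, contradicting Sylvester's theorem. *)

Lemma sgrp2_geq_conductor (a b m : nat) : 0 < a -> 0 < b -> coprime a b ->
  a.-1 * b.-1 <= m -> sgrp2 a b m.
Proof.
move=> a_gt0 b_gt0 coprime_ab m_ge.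
pose x := chinese a b 0 m %/ a %% b.
have xa_eq_m : x * a = m %[mod b].
  have a_dvd : a %| chinese a b 0 m by rewrite /dvdn chinese_modl // mod0n.
  by rewrite /x modnMml divnK // chinese_modr.
have xa_le_m : x * a <= m.
  rewrite leqNgt; apply/negP => m_lt.
  have : b %| x * a - m by rewrite -eqn_mod_dvd ?xa_eq_m // ltnW.
  move/dvdn_leq; rewrite subn_gt0 => /(_ m_lt) b_le.
  have : x * a <= b.-1 * a by rewrite leq_mul2r -ltnS prednK // ltn_mod b_gt0 orbT.
  have : b.-1 * a = a.-1 * b.-1 + b.-1.
    by rewrite -{1}(prednK a_gt0) mulnS addnC mulnC.
  lia.
have : b %| m - x * a by rewrite -eqn_mod_dvd // xa_eq_m.
case/dvdnP => y y_eq; exists x, y; lia.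
Qed.

Lemma MN_shift n a b m : sgrp2 a b m -> MN n a b ((a + b) * n + m)%:Z.
Proof.
move=> [x [y ->]]; exists (n + x), (n + y).
split; first by right; exact: leq_addr.
split; first by right; exact: leq_addr.
by congr Posz; lia.
Qed.

Lemma coprime_ndvd_gt1 a b m : coprime a b -> ~~ (a %| m) -> ~~ (b %| m) -> 1 < a.
Proof.
case: a => [|[|a]] //; last by rewrite dvd1n.
by rewrite /coprime gcd0n => /eqP -> _; rewrite dvd1n.
Qed.

Section CoprimeGenerators.

Variables a b : nat.
Hypotheses (a_gt1 : 1 < a) (b_gt1 : 1 < b) (coprime_ab : coprime a b).

Let coprime_ba : coprime b a. Proof. by rewrite coprime_sym. Qed.

Lemma sgrp2_Sylvester_gap : ~ sgrp2 a b (a * b - a - b).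
Proof.
move=> [x [y xy_eq]].
have ab_eq : a * b = x.+1 * a + y.+1 * b by nia.
have a_dvd : a %| y.+1.
  rewrite -(Gauss_dvdl _ coprime_ab) -(dvdn_addr _ (dvdn_mull x.+1 (dvdnn a))).
  by rewrite -ab_eq dvdn_mulr.
have b_dvd : b %| x.+1.
  rewrite -(Gauss_dvdl _ coprime_ba) -(dvdn_addl _ (dvdn_mull y.+1 (dvdnn b))).
  by rewrite -ab_eq dvdn_mull.
have := dvdn_leq (ltn0Sn _) a_dvd; have := dvdn_leq (ltn0Sn _) b_dvd.
nia.
Qed.

Lemma is_chi_coprime c : is_chi a b c -> c = a.-1 * b.-1.
Proof.
move=> [c_conductor c_min].
have c_le : c <= a.-1 * b.-1.
  by apply: c_min => k; apply: sgrp2_geq_conductor; rewrite ?leq_addr //; lia.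
apply/eqP; rewrite eqn_leq c_le leqNgt /=; apply/negP => c_lt.
apply: sgrp2_Sylvester_gap.
have -> : a * b - a - b = c + (a * b - a - b - c) by nia.
exact: c_conductor.
Qed.

Section Template.

Variable n : nat.
Hypotheses (n_gt0 : 0 < n) (a_ndvd : ~~ (a %| n.-1)) (b_ndvd : ~~ (b %| n.-1)).

Lemma Frobenius_pred_eq :
  (a + b) * n + a.-1 * b.-1 - 1 = a * n.-1 + b * (n.-1 + a).
Proof.
by case: a a_gt1 => // a' _; case: b b_gt1 => // b' _; case: n n_gt0 => // n' _; nia.
Qed.

Lemma not_MN_Frobenius_pred : ~ MN n a b ((a + b) * n + a.-1 * b.-1 - 1)%:Z.
Proof.
move=> [l1 [l2 [[l1_0 | n_le_l1] [[l2_0 | n_le_l2] /eqP]]]];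
  rewrite eqz_nat Frobenius_pred_eq => /eqP l_eq.
- by move: l_eq; rewrite l1_0 l2_0; nia.
- have : b %| a * n.-1.
    by rewrite -(dvdn_addl _ (dvdn_mulr (n.-1 + a) (dvdnn b))) l_eq l1_0 dvdn_mull.
  by rewrite Gauss_dvdr // (negbTE b_ndvd).
- have : a %| b * (n.-1 + a).
    by rewrite -(dvdn_addr _ (dvdn_mulr n.-1 (dvdnn a))) l_eq l2_0 addn0 dvdn_mull.
  by rewrite Gauss_dvdr // dvdn_addl // (negbTE a_ndvd).
- apply: sgrp2_Sylvester_gap; exists (l1 - n), (l2 - n).
  have := leq_mul2r a n l1; have := leq_mul2r b n l2.
  rewrite n_le_l1 n_le_l2 !orbT mulnBl; nia.
Qed.

Lemma Frob_iff_ge (w : int) :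
  Frob n a b w <-> (((a + b) * n + a.-1 * b.-1)%:Z <= w)%R.
Proof.
split=> [w_Frob | w_ge k].
  rewrite leNgt; apply/negP => w_lt; apply: not_MN_Frobenius_pred.
  have abn_gt0 : 0 < (a + b) * n by rewrite muln_gt0 n_gt0; lia.
  have := w_Frob (absz (((a + b) * n + a.-1 * b.-1 - 1)%:Z - w)%R).
  by congr MN; lia.
have -> : (w + k%:Z = ((a + b) * n + (absz w - (a + b) * n + k))%:Z)%R by lia.
by apply/MN_shift/sgrp2_geq_conductor; lia.
Qed.

End Template.

End CoprimeGenerators.

Local Open Scope ring_scope.

Theorem proposition3p2 (a b n : nat) (c : nat) :
  (0 < n)%N -> coprime a b ->
  ~~ (a %| n.-1)%N -> ~~ (b %| n.-1)%N ->
  is_chi a b c ->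
  forall w : int,
    Frob n a b w <-> exists k : nat, w = (((a + b) * n + c)%N)%:Z + k%:Z.
Proof.
move=> n_gt0 coprime_ab a_ndvd b_ndvd chi_c w.
have a_gt1 := coprime_ndvd_gt1 coprime_ab a_ndvd b_ndvd.
have b_gt1 : (1 < b)%N.
  by apply: coprime_ndvd_gt1 b_ndvd a_ndvd; rewrite coprime_sym.
rewrite (is_chi_coprime a_gt1 b_gt1 coprime_ab chi_c) Frob_iff_ge //.
by split=> [w_ge | [k ->]]; [exists `|w - ((a + b) * n + a.-1 * b.-1)%:Z|%N | ]; lia.
Qed.
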